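(* Let $n=n_1+\dots+n_k+\tilde n$ with $n_i\ge1$, $\tilde n\ge 0$, and let $M$ be the corresponding standard Levi subgroup of $\mathrm{SO}_{2n+1}(F)$, identified with $\mathrm{GL}_{n_1}(F)\times\cdots\times\mathrm{GL}_{n_k}(F)\times\mathrm{SO}_{2\tilde n+1}(F)$. Then $M\cap\mathrm{J}^+=\mathrm{GL}_{n_1}(\mathcal{O})\times\cdots\times\mathrm{GL}_{n_k}(\mathcal{O})\times\mathrm{J}^+_{2\tilde n+1}$, where $\mathrm{J}^+_{2\tilde n+1}$ is the paramodular subgroup of $\mathrm{SO}_{2\tilde n+1}(F)$.
   Context: $F$ non-archimedean local field of characteristic $0$, ring of integers $\mathcal{O}$, $\mathfrak{p}=\varpi\mathcal{O}$, residue field $k$. $V_n$ has basis $\mathcal{B}_0=(e_1,\dots,e_n,v_0,f_n,\dots,f_1)$ with $\langle e_i,f_j\rangle=\delta_{ij}$, $\langle v_0,v_0\rangle=2$, other pairings $0$, $q(x)=\langle x,x\rangle/2$, $\mathrm{SO}_{2n+1}(F)=\mathrm{SO}(V_n,q)$. The Levi $M$ consists of elements whose matrix in $\mathcal{B}_0$ is block diagonal $\mathrm{diag}(C_1,\dots,C_k,D,{}^\tau C_k^{-1},\dots,{}^\tau C_1^{-1})$ with $C_i\in\mathrm{GL}_{n_i}(F)$, ${}^\tau$ the transpose with respect to the antidiagonal, and $D\in\mathrm{SO}(V_{\tilde n})$ where $V_{\tilde n}$ is spanned by $e_{n'+1},\dots,e_n,v_0,f_n,\dots,f_{n'+1}$,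 $n'=n_1+\dots+n_k$; this gives the identification. Paramodular subgroup, defined for any such space with basis $(e_1,\dots,e_m,v_0,f_m,\dots,f_1)$: $L=\oplus\mathcal{O}e_i\oplus\oplus\varpi\mathcal{O}f_i\oplus\varpi\mathcal{O}v_0$, $\mathrm{J}=\{g\in\mathrm{SO}:g(L)=L\}$; for $g\in\mathrm{J}$, reducing its action on $L$ modulo $\mathfrak{p}$ and passing to the quotient of $L/\mathfrak{p}L$ by the kernel (spanned by the image of $\varpi v_0$) of the form induced by $q/\varpi$ gives $\bar g$ in a $2m$-dimensional orthogonal group; $\alpha(g)=\det\bar g$ if $\mathrm{char}\,k\ne2$, the Dickson–Dieudonné determinant of $\bar g$ if $\mathrm{char}\,k=2$; $\mathrm{J}^+=\ker\alpha$. $\mathrm{J}^+=\mathrm{J}^+_{2n+1}$ for $V_n$ and $\mathrm{J}^+_{2\tilde n+1}$ for $V_{\tilde n}$. *)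

From HB Require Import structures.
From mathcomp Require Import all_boot all_order all_algebra.
From mathcomp Require Import zify.
Set Implicit Arguments. Unset Strict Implicit. Unset Printing Implicit Defensive.
Import Order.TTheory GRing.Theory Num.Theory.
Local Open Scope ring_scope.

Section LocalField.
Variables (F : fieldType) (v : F -> int).

(* v is a normalized discrete valuation on F^x (value at 0 is irrelevant) *)
Definition is_dvaluation : Prop :=
  [/\ forall x y : F, x != 0 -> y != 0 -> v (x * y) = v x + v y,
      forall x y : F, x != 0 -> y != 0 -> x + y != 0 ->
        Num.min (v x) (v y) <= v (x + y)
    & exists t : F, t != 0 /\ v t = 1].

Definition inO (x : F) : bool := (x == 0) || (0 <= v x).
Definition inP (x : F) : bool := (x == 0) || (0 < v x).

Definition vsmall (x : F) (N : int) : bool := (x == 0) || (N <= v x).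

Definition v_complete : Prop :=
  forall u : nat -> F,
    (forall N : int, exists m, forall i j, (m <= i)%N -> (m <= j)%N ->
        vsmall (u i - u j) N) ->
    exists l : F, forall N : int, exists m, forall i, (m <= i)%N -> vsmall (u i - l) N.

Definition residue_map (k : fieldType) (red : F -> k) : Prop :=
  [/\ red 1 = 1,
      forall x y, inO x -> inO y -> red (x + y) = red x + red y,
      forall x y, inO x -> inO y -> red (x * y) = red x * red y,
      forall x, inO x -> (red x == 0) = inP x
    & forall c : k, exists x, inO x /\ red x = c].

Definition nonarch_local_field_char0 (k : finFieldType) (red : F -> k) : Prop :=
  [/\ [pchar F] =i pred0, is_dvaluation, v_complete & residue_map red].

(* ---------- the orthogonal space V_m with basis
   (e_1..e_m, v0, f_m..f_1), indices 0..2m; e_i at i-1, v0 at m, f_i at 2m+1-i.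
   Matrices act on column vectors of coordinates. *)
Definition gram (m : nat) : 'M[F]_(m.*2.+1) :=
  \matrix_(i, j) if (i + j == m.*2)%N then (if i == inord m then 2%:R else 1) else 0.

Definition inSO (m : nat) (g : 'M[F]_(m.*2.+1)) : bool :=
  (g^T *m gram m *m g == gram m) && (\det g == 1).

Definition inL (m : nat) (x : 'cV[F]_(m.*2.+1)) : bool :=
  [forall i : 'I_(m.*2.+1), if (i < m)%N then inO (x i 0) else inP (x i 0)].

Definition inJ (m : nat) (g : 'M[F]_(m.*2.+1)) : Prop :=
  [/\ inSO g,
      forall x, inL x -> inL (g *m x)
    & forall y, inL y -> exists x, inL x /\ g *m x = y].

Variables (k : finFieldType) (red : F -> k) (w : F).

(* w = uniformizer; basis of L : (e_i, w v0, w f_i); scaling factors *)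
Definition dsc (m : nat) (i : 'I_(m.*2.+1)) : F := if (i < m)%N then 1 else w.

(* reduction mod p of g|_L, then passing to the quotient by the kernel
   line (image of w v0, index m) of the form induced by q/w *)
Definition gbar (m : nat) (g : 'M[F]_(m.*2.+1)) : 'M[k]_(m.*2) :=
  let mid : 'I_(m.*2.+1) := inord m in
  \matrix_(i, j) red (g (lift mid i) (lift mid j) * dsc (lift mid j)
                       / dsc (lift mid i)).

(* alpha(g) trivial: det (char k <> 2), Dickson invariant
   rank(1 - gbar) mod 2 (char k = 2) *)
Definition alpha_trivial (m : nat) (g : 'M[F]_(m.*2.+1)) : bool :=
  if (2%:R == 0 :> k) then ~~ odd (\rank (1%:M - gbar g))
  else \det (gbar g) == 1.

Definition inJplus (m : nat) (g : 'M[F]_(m.*2.+1)) : Prop :=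
  inJ g /\ alpha_trivial g.

Definition inGLO (a : nat) (A : 'M[F]_a) : Prop :=
  [/\ A \in unitmx, forall i j, inO (A i j) & forall i j, inO (invmx A i j)].

End LocalField.

Definition antitr (R : Type) (a : nat) (A : 'M[R]_a) : 'M[R]_a :=
  \matrix_(i, j) A (rev_ord j) (rev_ord i).

Lemma levi_size (a b : nat) : (a + (b.*2.+1 + a))%N = (a + b).*2.+1.
Proof. rewrite doubleD -!addnn; lia. Qed.

Definition levi (F : fieldType) (a b : nat) (C : 'M[F]_a) (D : 'M[F]_(b.*2.+1))
  : 'M[F]_((a + b).*2.+1) :=
  castmx (levi_size a b, levi_size a b)
    (block_mx C 0 0 (block_mx D 0 0 (antitr (invmx C)))).

Definition blockdiag (F : fieldType) (r : nat) (p : 'I_r -> nat)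
  (C : forall i : 'I_r, 'M[F]_(p i)) : 'M[F]_(\sum_(i < r) p i) :=
  @mxdiag F r p C.

(* The Levi element g = diag(C, D, antitr C^-1) respects the decomposition
   L = O^a (+) L_D (+) p^a of the lattice, so g(L) = L iff C(O^a) = O^a, D(L_D) = L_D and
   antitr C^-1 (p^a) = p^a; the first and last conditions both say C is in GL_a(O).
   Reducing modulo p, gbar g = diag(Cbar, gbar D, antitr Cbar^-1), so det gbar g = det gbar D
   and rank (1 - gbar g) = rank (1 - gbar D) + 2 rank (1 - Cbar): alpha(g) = alpha(D).
   Finally diag(C_1, ..., C_k) is in GL(O) iff every C_i is, its inverse being
   diag(C_1^-1, ..., C_k^-1). *)

From HB Require Import structures.
From mathcomp Require Import all_boot all_order all_algebra all_fingroup.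
From mathcomp Require Import zify.
Set Implicit Arguments. Unset Strict Implicit. Unset Printing Implicit Defensive.
Import Order.TTheory GRing.Theory Num.Theory.
Local Open Scope ring_scope.

Lemma mulmx_castmx (R : pzRingType) m1 n1 p1 m2 n2 p2
    (Em : m1 = m2) (En : n1 = n2) (Ep : p1 = p2) (A : 'M[R]_(m1, n1)) (B : 'M_(n1, p1)) :
  castmx (Em, En) A *m castmx (En, Ep) B = castmx (Em, Ep) (A *m B).
Proof. by case: m2 / Em; case: n2 / En; case: p2 / Ep; rewrite !castmx_id. Qed.

Lemma trmx_castmx (R : Type) m1 n1 m2 n2 (Em : m1 = m2) (En : n1 = n2) (A : 'M[R]_(m1, n1)) :
  (castmx (Em, En) A)^T = castmx (En, Em) A^T.
Proof. by case: m2 / Em; case: n2 / En; rewrite !castmx_id. Qed.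

Lemma det_castmx (R : comPzRingType) n1 n2 (E : n1 = n2) (A : 'M[R]_n1) :
  \det (castmx (E, E) A) = \det A.
Proof. by case: n2 / E; rewrite castmx_id. Qed.

Lemma mxrank_castmx (R : fieldType) m1 n1 m2 n2 (Em : m1 = m2) (En : n1 = n2)
    (A : 'M[R]_(m1, n1)) :
  \rank (castmx (Em, En) A) = \rank A.
Proof. by case: m2 / Em; case: n2 / En; rewrite castmx_id. Qed.

Lemma castmx_sub1mx (R : pzRingType) n1 n2 (E : n1 = n2) (A : 'M[R]_n1) :
  castmx (E, E) (1%:M - A) = 1%:M - castmx (E, E) A.
Proof. by case: n2 / E; rewrite !castmx_id. Qed.

Section Block3.
Variables (a n c : nat).

Definition block3_mx (R : Type)
    (A11 : 'M[R]_(a, a)) (A12 : 'M[R]_(a, n)) (A13 : 'M[R]_(a, c))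
    (A21 : 'M[R]_(n, a)) (A22 : 'M[R]_(n, n)) (A23 : 'M[R]_(n, c))
    (A31 : 'M[R]_(c, a)) (A32 : 'M[R]_(c, n)) (A33 : 'M[R]_(c, c)) : 'M[R]_(a + (n + c)) :=
  block_mx A11 (row_mx A12 A13) (col_mx A21 A31) (block_mx A22 A23 A32 A33).

Lemma tr_block3_mx (R : Type) A11 A12 A13 A21 A22 A23 A31 A32 A33 :
  (@block3_mx R A11 A12 A13 A21 A22 A23 A31 A32 A33)^T =
  block3_mx A11^T A21^T A31^T A12^T A22^T A32^T A13^T A23^T A33^T.
Proof. by rewrite /block3_mx tr_block_mx tr_row_mx tr_col_mx tr_block_mx. Qed.

Lemma mul_block3_mx (R : pzRingType) A11 A12 A13 A21 A22 A23 A31 A32 A33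
    B11 B12 B13 B21 B22 B23 B31 B32 B33 :
  @block3_mx R A11 A12 A13 A21 A22 A23 A31 A32 A33 *m
  @block3_mx R B11 B12 B13 B21 B22 B23 B31 B32 B33 =
  block3_mx (A11 *m B11 + A12 *m B21 + A13 *m B31) (A11 *m B12 + A12 *m B22 + A13 *m B32)
            (A11 *m B13 + A12 *m B23 + A13 *m B33)
            (A21 *m B11 + A22 *m B21 + A23 *m B31) (A21 *m B12 + A22 *m B22 + A23 *m B32)
            (A21 *m B13 + A22 *m B23 + A23 *m B33)
            (A31 *m B11 + A32 *m B21 + A33 *m B31) (A31 *m B12 + A32 *m B22 + A33 *m B32)
            (A31 *m B13 + A32 *m B23 + A33 *m B33).
Proof.
rewrite /block3_mx mulmx_block mul_row_col mul_mx_row mul_row_block mul_col_mx mul_col_row.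
by rewrite mul_block_col mulmx_block add_row_mx add_col_mx add_block_mx !addrA.
Qed.

Lemma mul_block3_col_mx (R : pzRingType) A11 A12 A13 A21 A22 A23 A31 A32 A33 m
    (x1 : 'M_(a, m)) x2 x3 :
  @block3_mx R A11 A12 A13 A21 A22 A23 A31 A32 A33 *m col_mx x1 (col_mx x2 x3) =
  col_mx (A11 *m x1 + A12 *m x2 + A13 *m x3)
         (col_mx (A21 *m x1 + A22 *m x2 + A23 *m x3) (A31 *m x1 + A32 *m x2 + A33 *m x3)).
Proof.
rewrite /block3_mx mul_block_col mul_row_col mul_col_mx mul_block_col add_col_mx.
by rewrite !addrA.
Qed.

End Block3.

Section AntidiagonalTranspose.

Definition rev_perm (a : nat) : 'S_a := perm (@rev_ord_inj a).
Definition rev_mx (R : pzRingType) (a : nat) : 'M[R]_a := perm_mx (rev_perm a).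

Lemma rev_permV a : ((rev_perm a)^-1)%g = rev_perm a.
Proof.
by apply/eqP; rewrite eq_invg_mul; apply/eqP/permP => i; rewrite permM !permE /= rev_ordK.
Qed.

Lemma rev_mxK (R : pzRingType) a : rev_mx R a *m rev_mx R a = 1%:M.
Proof. by rewrite /rev_mx -perm_mxM -[X in (_ * X)%g]rev_permV mulgV perm_mx1. Qed.

Lemma tr_rev_mx (R : pzRingType) a : (rev_mx R a)^T = rev_mx R a.
Proof. by rewrite /rev_mx tr_perm_mx rev_permV. Qed.

Lemma rev_mx_unit (R : comUnitRingType) a : rev_mx R a \in unitmx.
Proof. by case: (mulmx1_unit (rev_mxK R a)). Qed.

Lemma rev_mxE (R : pzRingType) a (i j : 'I_a) : rev_mx R a i j = (rev_ord i == j)%:R.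
Proof. by rewrite /rev_mx /perm_mx /row_perm !mxE permE. Qed.

Lemma antitrE (R : pzRingType) a (A : 'M[R]_a) : antitr A = rev_mx R a *m A^T *m rev_mx R a.
Proof.
rewrite /rev_mx -row_permE -[X in _ *m perm_mx X]rev_permV -col_permE.
by apply/matrixP => i j; rewrite !mxE !permE.
Qed.

Lemma mul_antitr (R : comPzRingType) a (A B : 'M[R]_a) :
  antitr A *m antitr B = antitr (B *m A).
Proof.
by rewrite !antitrE trmx_mul !mulmxA -(mulmxA _ (rev_mx R a) (rev_mx R a)) rev_mxK mulmx1.
Qed.

Lemma antitr1 (R : pzRingType) a : antitr (1%:M : 'M[R]_a) = 1%:M.
Proof. by rewrite antitrE trmx1 mulmx1 rev_mxK. Qed.

Lemma antitrB (R : pzRingType) a (A B : 'M[R]_a) : antitr (A - B) = antitr A - antitr B.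
Proof. by apply/matrixP => i j; rewrite !mxE. Qed.

Lemma det_antitr (R : comUnitRingType) a (A : 'M[R]_a) : \det (antitr A) = \det A.
Proof. by rewrite antitrE !det_mulmx det_tr mulrC mulrA -det_mulmx rev_mxK det1 mul1r. Qed.

Lemma mxrank_antitr (R : fieldType) a (A : 'M[R]_a) : \rank (antitr A) = \rank A.
Proof.
have free_rev : row_free (rev_mx R a) by rewrite row_free_unit rev_mx_unit.
by rewrite antitrE mxrankMfree // -mxrank_tr trmx_mul trmxK tr_rev_mx mxrankMfree.
Qed.

Lemma map_antitr (R S : Type) (f : R -> S) a (A : 'M[R]_a) :
  map_mx f (antitr A) = antitr (map_mx f A).
Proof. by apply/matrixP => i j; rewrite !mxE. Qed.

End AntidiagonalTranspose.

Section BlockDiagonal.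
Variables (r : nat) (p : 'I_r -> nat).

Lemma mul_mxdiag (R : pzRingType) (B E : forall i, 'M[R]_(p i)) :
  mxdiag B *m mxdiag E = mxdiag (fun i => B i *m E i).
Proof.
rewrite [X in _ *m X]/mxdiag mul_mxdiag_mxblock /mxdiag; apply: eq_mxblock => i j.
by case: (eqVneq i j) => [<-|_]; rewrite ?conform_mx_id ?mulmx0.
Qed.

Lemma mxdiag_block_entry (R : nmodType) (B : forall i, 'M[R]_(p i)) i k l :
  exists s t, B i k l = mxdiag B s t.
Proof. by rewrite -{1}(submxblock_diag B i) /submxblock mxE; do 2!eexists. Qed.

Lemma mxdiag_entry_ind (R : nmodType) (B : forall i, 'M[R]_(p i)) (P : pred R) :
  P 0 -> (forall i k l, P (B i k l)) -> forall s t, P (mxdiag B s t).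
Proof.
move=> P0 PB s t; rewrite /mxdiag /mxblock mxE.
move: (tagnat.sig2 s) (tagnat.sig2 t).
case: (eqVneq (tagnat.sig1 s) (tagnat.sig1 t)) => [e|_] k l; last by rewrite mxE.
by move: l; rewrite -e => l; rewrite conform_mx_id.
Qed.

End BlockDiagonal.

Lemma det_levi_block (R : comUnitRingType) a n (M N : 'M[R]_a) (G : 'M[R]_n) :
  M *m N = 1%:M -> \det (block_mx M 0 0 (block_mx G 0 0 (antitr N))) = \det G.
Proof. by move=> MN; rewrite !det_ublock det_antitr mulrCA -det_mulmx MN det1 mulr1. Qed.

Lemma mxrank_sub1_levi_block (R : fieldType) a n (M N : 'M[R]_a) (G : 'M[R]_n) :
  M *m N = 1%:M ->
  \rank (1%:M - block_mx M 0 0 (block_mx G 0 0 (antitr N))) =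
  (\rank (1%:M - G)%R + (\rank (1%:M - M)%R).*2)%N.
Proof.
move=> MN; have [_ Nu] := mulmx1_unit MN.
rewrite (scalar_mx_block a (n + a)) (scalar_mx_block n a).
rewrite !opp_block_mx !add_block_mx !oppr0 !addr0 !rank_diag_block_mx.
have -> : \rank (1%:M - antitr N) = \rank (1%:M - M).
  rewrite -[X in X - antitr N]antitr1 -antitrB mxrank_antitr.
  have -> : 1%:M - N = (M - 1%:M) *m N by rewrite mulmxBl MN mul1mx.
  by rewrite mxrankMfree ?row_free_unit // -opprB mxrank_opp.
by rewrite -addnn; lia.
Qed.

Lemma levi_size_bar (a b : nat) : (a + (b.*2 + a))%N = (a + b).*2.
Proof. rewrite doubleD -!addnn; lia. Qed.

Ltac case_split_ord I k :=
  case: (split_ordP I) => k ->;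
  [move: (ltn_ord k) => ? | case: (split_ordP k) => {}k ->; move: (ltn_ord k) => ?].

Ltac block_mxE := rewrite ?block_mxEul ?block_mxEur ?block_mxEdl ?block_mxEdr
  ?row_mxEl ?row_mxEr ?col_mxEu ?col_mxEd.

Section Levi.
Variables (F : fieldType) (a b : nat).
Implicit Types (C : 'M[F]_a) (D : 'M[F]_(b.*2.+1)).

Let E := levi_size a b.

Lemma levi_block3 C D :
  levi C D = castmx (E, E) (block3_mx C 0 0 0 D 0 0 0 (antitr (invmx C))).
Proof. by rewrite /levi /block3_mx row_mx0 col_mx0. Qed.

Lemma gram_block3 :
  gram F (a + b) = castmx (E, E) (block3_mx 0 0 (rev_mx F a) 0 (gram F b) 0 (rev_mx F a) 0 0).
Proof.
apply/matrixP => i j; rewrite -[i](cast_ordKV E) -[j](cast_ordKV E) castmxE !cast_ordK.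
move: (cast_ord _ i) (cast_ord _ j) => {}i {}j.
have ab : ((inord (a + b) : 'I_((a + b).*2.+1)) : nat) = (a + b)%N by rewrite inordK //; lia.
have bb : ((inord b : 'I_(b.*2.+1)) : nat) = b by rewrite inordK //; lia.
rewrite /block3_mx; case_split_ord i k; case_split_ord j l; do 3!block_mxE;
  rewrite ?rev_mxE !mxE /= -!val_eqE /= ?ab ?bb; repeat (case: eqP => /= ?); by [|lia].
Qed.

Lemma levi_SO C D : C \in unitmx -> inSO D -> inSO (levi C D).
Proof.
move=> Cu /andP[/eqP DgD /eqP detD]; apply/andP; split; last first.
  rewrite levi_block3 det_castmx /block3_mx row_mx0 col_mx0 !det_ublock detD det_antitr.
  by rewrite det_inv mul1r mulfV // -unitfE -unitmxE.
rewrite levi_block3 trmx_castmx gram_block3 !mulmx_castmx tr_block3_mx !mul_block3_mx.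
rewrite !(mul0mx, mulmx0, addr0, add0r, trmx0) DgD; apply/eqP.
congr (castmx _ (block3_mx _ _ _ _ _ _ _ _ _)).
  rewrite antitrE !mulmxA -(mulmxA _ (rev_mx F a) (rev_mx F a)) rev_mxK mulmx1.
  by rewrite -trmx_mul mulVmx // trmx1 mul1mx.
rewrite antitrE !trmx_mul trmxK tr_rev_mx !mulmxA -(mulmxA _ (rev_mx F a) (rev_mx F a)).
by rewrite rev_mxK mulmx1 -mulmxA mulVmx // mulmx1.
Qed.

Definition levi_col (x1 : 'cV[F]_a) (x2 : 'cV[F]_(b.*2.+1)) (x3 : 'cV[F]_a) :
  'cV[F]_((a + b).*2.+1) :=
  castmx (E, erefl 1%N) (col_mx x1 (col_mx x2 x3)).

Lemma levi_colP (x : 'cV[F]_((a + b).*2.+1)) : exists x1 x2 x3, x = levi_col x1 x2 x3.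
Proof.
set y := castmx (esym E, erefl 1%N) x.
exists (usubmx y), (usubmx (dsubmx y)), (dsubmx (dsubmx y)).
by rewrite /levi_col !vsubmxK castmxKV.
Qed.

Lemma levi_col_inj x1 x2 x3 y1 y2 y3 :
  levi_col x1 x2 x3 = levi_col y1 y2 y3 -> [/\ x1 = y1, x2 = y2 & x3 = y3].
Proof. by move/(can_inj (castmxK _ _))/eq_col_mx => [-> /eq_col_mx[-> ->]]. Qed.

Lemma levi_mul_col C D x1 x2 x3 :
  levi C D *m levi_col x1 x2 x3 = levi_col (C *m x1) (D *m x2) (antitr (invmx C) *m x3).
Proof.
by rewrite levi_block3 mulmx_castmx mul_block3_col_mx !mul0mx !(addr0, add0r).
Qed.

End Levi.

Section Valuation.
Variables (F : fieldType) (v : F -> int).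
Hypothesis v_mul : forall x y : F, x != 0 -> y != 0 -> v (x * y) = v x + v y.
Hypothesis v_min : forall x y : F, x != 0 -> y != 0 -> x + y != 0 ->
  Num.min (v x) (v y) <= v (x + y).

Lemma valuation1 : v 1 = 0.
Proof.
have := v_mul (oner_neq0 F) (oner_neq0 F); rewrite mulr1 => v11.
by apply: (@addrI _ (v 1)); rewrite addr0 -v11.
Qed.

Lemma inO0 : inO v 0. Proof. by rewrite /inO eqxx. Qed.
Lemma inP0 : inP v 0. Proof. by rewrite /inP eqxx. Qed.
Lemma inO1 : inO v 1. Proof. by rewrite /inO valuation1 lexx orbT. Qed.

Lemma inP_inO x : inP v x -> inO v x.
Proof. by rewrite /inP /inO => /orP[->|/ltW->]; rewrite ?orbT. Qed.

Lemma valuationD_ge (N : int) x y : x != 0 -> y != 0 -> x + y != 0 ->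
  N <= v x -> N <= v y -> N <= v (x + y).
Proof. by move=> x0 y0 xy0 Nx Ny; apply: le_trans (v_min x0 y0 xy0); rewrite le_min Nx. Qed.

Lemma inOD x y : inO v x -> inO v y -> inO v (x + y).
Proof.
rewrite /inO; have [->|x0] := eqVneq x 0; first by rewrite add0r.
have [->|y0] := eqVneq y 0; first by rewrite addr0 (negPf x0).
by have [//|xy0 /= Ox Oy] := eqVneq (x + y) 0; apply: valuationD_ge.
Qed.

Lemma inPD x y : inP v x -> inP v y -> inP v (x + y).
Proof.
rewrite /inP; have [->|x0] := eqVneq x 0; first by rewrite add0r.
have [->|y0] := eqVneq y 0; first by rewrite addr0 (negPf x0).
by have [//|xy0 /= Px Py] := eqVneq (x + y) 0; apply: (@valuationD_ge 1).
Qed.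

Lemma inOM x y : inO v x -> inO v y -> inO v (x * y).
Proof.
rewrite /inO mulf_eq0; have [//|x0] := eqVneq x 0.
by have [//|y0 /= Ox Oy] := eqVneq y 0; rewrite v_mul // addr_ge0.
Qed.

Lemma inPM x y : inO v x -> inP v y -> inP v (x * y).
Proof.
rewrite /inO /inP mulf_eq0; have [//|x0] := eqVneq x 0.
by have [//|y0 /= Ox Py] := eqVneq y 0; rewrite v_mul // ltr_wpDl.
Qed.

Lemma inO_sum (I : Type) (s : seq I) (P : pred I) (f : I -> F) :
  (forall i, P i -> inO v (f i)) -> inO v (\sum_(i <- s | P i) f i).
Proof. by move=> Of; apply: (big_ind (inO v)); [exact: inO0 | exact: inOD |]. Qed.

Lemma inP_sum (I : Type) (s : seq I) (P : pred I) (f : I -> F) :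
  (forall i, P i -> inP v (f i)) -> inP v (\sum_(i <- s | P i) f i).
Proof. by move=> Pf; apply: (big_ind (inP v)); [exact: inP0 | exact: inPD |]. Qed.

Definition integral_mx m n (A : 'M[F]_(m, n)) : Prop := forall i j, inO v (A i j).

Definition inOcol n (x : 'cV[F]_n) : bool := [forall i, inO v (x i 0)].
Definition inPcol n (x : 'cV[F]_n) : bool := [forall i, inP v (x i 0)].

Lemma inOcol0 n : inOcol (0 : 'cV_n).
Proof. by apply/forallP => i; rewrite mxE inO0. Qed.

Lemma inPcol0 n : inPcol (0 : 'cV_n).
Proof. by apply/forallP => i; rewrite mxE inP0. Qed.

Lemma inOcol_mul m n (A : 'M_(m, n)) x : integral_mx A -> inOcol x -> inOcol (A *m x).
Proof.
move=> OA /forallP Ox; apply/forallP => i; rewrite mxE.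
by apply: inO_sum => j _; apply: inOM.
Qed.

Lemma inPcol_mul m n (A : 'M_(m, n)) x : integral_mx A -> inPcol x -> inPcol (A *m x).
Proof.
move=> OA /forallP Px; apply/forallP => i; rewrite mxE.
by apply: inP_sum => j _; apply: inPM.
Qed.

Lemma integral_mxP m n (A : 'M_(m, n)) :
  integral_mx A <-> forall x, inOcol x -> inOcol (A *m x).
Proof.
split=> [OA x|AO i j]; first exact: inOcol_mul.
have Oej : inOcol (delta_mx j 0 : 'cV_n).
  by apply/forallP => l; rewrite mxE; case: (_ && _); [exact: inO1 | exact: inO0].
by move/forallP/(_ i): (AO _ Oej); rewrite -colE mxE.
Qed.

Lemma integral_invmx n (A : 'M_n) : A \in unitmx ->
  (forall y, inOcol y -> exists2 x, inOcol x & A *m x = y) -> integral_mx (invmx A).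
Proof.
move=> Au onto; apply/integral_mxP => y /onto[x Ox <-].
by rewrite mulmxA mulVmx // mul1mx.
Qed.

Lemma integral_antitr n (A : 'M_n) : integral_mx A -> integral_mx (antitr A).
Proof. by move=> OA i j; rewrite mxE. Qed.

Lemma inL0 m : inL v (0 : 'cV[F]_(m.*2.+1)).
Proof. by apply/forallP => i; rewrite mxE; case: ifP => _; [exact: inO0 | exact: inP0]. Qed.

Section Residue.
Variables (k : fieldType) (red : F -> k).
Hypothesis red1 : red 1 = 1.
Hypothesis redD : forall x y, inO v x -> inO v y -> red (x + y) = red x + red y.
Hypothesis redM : forall x y, inO v x -> inO v y -> red (x * y) = red x * red y.

Lemma red0 : red 0 = 0.
Proof. by apply: (addrI (red 0)); rewrite -redD ?inO0 // !addr0. Qed.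

Lemma red_sum (I : Type) (s : seq I) (P : pred I) (f : I -> F) :
  (forall i, P i -> inO v (f i)) ->
  red (\sum_(i <- s | P i) f i) = \sum_(i <- s | P i) red (f i).
Proof.
move=> Of; suff [] : inO v (\sum_(i <- s | P i) f i) /\
                     red (\sum_(i <- s | P i) f i) = \sum_(i <- s | P i) red (f i) by [].
apply: (big_ind2 (fun x y => inO v x /\ red x = y)).
- by rewrite inO0 red0.
- by move=> x1 x2 y1 y2 [O1 <-] [O2 <-]; rewrite inOD // redD.
- by move=> i Pi; rewrite Of.
Qed.

Lemma map_red_mulmx m n l (A : 'M_(m, n)) (B : 'M_(n, l)) :
  integral_mx A -> integral_mx B -> map_mx red (A *m B) = map_mx red A *m map_mx red B.
Proof.
move=> OA OB; apply/matrixP => i j; rewrite !mxE red_sum; last by move=> h _; apply: inOM.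
by apply: eq_bigr => h _; rewrite !mxE redM.
Qed.

Lemma map_red1 n : map_mx red (1%:M : 'M_n) = 1%:M.
Proof. by apply/matrixP => i j; rewrite !mxE; case: (i == j); rewrite ?red1 ?red0. Qed.

End Residue.

Section LeviLattice.
Variables (a b : nat).
Implicit Types (C : 'M[F]_a) (D : 'M[F]_(b.*2.+1)).

Lemma inL_levi_col (x1 : 'cV_a) (x2 : 'cV_(b.*2.+1)) (x3 : 'cV_a) :
  inL v (levi_col x1 x2 x3) = [&& inOcol x1, inL v x2 & inPcol x3].
Proof.
pose cE := cast_ord (levi_size a b); rewrite /inL /levi_col.
apply/forallP/and3P => [L|[/forallP O1 /forallP L2 /forallP P3] i]; last first.
  rewrite -[i](cast_ordKV (levi_size a b)) castmxE !cast_ordK cast_ord_id.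
  move: (cast_ord _ i) => {}i; case_split_ord i j; do 2!rewrite ?col_mxEu ?col_mxEd /=.
  - by case: ifP => [_|/negbT]; [exact: O1 | lia].
  - by rewrite ltn_add2l; apply: L2.
  - by case: ifP => [?|_]; [exfalso; lia | exact: P3].
split; apply/forallP => j.
- move: (L (cE (lshift _ j))); rewrite castmxE cast_ordK cast_ord_id col_mxEu /=.
  by case: ifP => // _; apply: inP_inO.
- move: (L (cE (rshift a (lshift a j)))).
  by rewrite castmxE cast_ordK cast_ord_id col_mxEd col_mxEu /= ltn_add2l.
- move: (L (cE (rshift a (rshift _ j)))).
  rewrite castmxE cast_ordK cast_ord_id col_mxEd col_mxEd /=.
  by case: ifP => // ?; move: (ltn_ord j); lia.
Qed.

Lemma inL_levi_mul_col C D x1 x2 x3 :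
  inL v (levi C D *m levi_col x1 x2 x3) =
  [&& inOcol (C *m x1), inL v (D *m x2) & inPcol (antitr (invmx C) *m x3)].
Proof. by rewrite levi_mul_col inL_levi_col. Qed.

Lemma inJ_levi_GLO C D : C \in unitmx -> inJ v (levi C D) -> inGLO v C.
Proof.
move=> Cu [_ maps onto]; split => //.
  apply/(integral_mxP C) => x Ox; move: (maps (levi_col x 0 0)).
  by rewrite inL_levi_mul_col inL_levi_col Ox inL0 inPcol0 !mulmx0 => /(_ isT)/and3P[].
apply: integral_invmx => // y Oy.
have [|x [Lx Cx]] := onto (levi_col y 0 0); first by rewrite inL_levi_col Oy inL0 inPcol0.
move: Lx Cx; have [x1 [x2 [x3 ->]]] := levi_colP x.
by rewrite inL_levi_col levi_mul_col => /and3P[O1 _ _] /levi_col_inj[C1 _ _]; exists x1.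
Qed.

Lemma inJ_levi_J C D : inSO D -> inJ v (levi C D) -> inJ v D.
Proof.
move=> SOD [_ maps onto]; split => // [x Lx|y Ly].
  move: (maps (levi_col 0 x 0)).
  by rewrite inL_levi_mul_col inL_levi_col Lx inOcol0 inPcol0 !mulmx0 => /(_ isT)/and3P[].
have [|x [Lx Dx]] := onto (levi_col 0 y 0); first by rewrite inL_levi_col Ly inOcol0 inPcol0.
move: Lx Dx; have [x1 [x2 [x3 ->]]] := levi_colP x.
by rewrite inL_levi_col levi_mul_col => /and3P[_ L2 _] /levi_col_inj[_ D2 _]; exists x2.
Qed.

Lemma levi_inJ C D : inGLO v C -> inJ v D -> inJ v (levi C D).
Proof.
case=> Cu OC OCi [SOD maps onto]; split; first exact: levi_SO.
  move=> x; have [x1 [x2 [x3 ->]]] := levi_colP x.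
  rewrite inL_levi_col inL_levi_mul_col => /and3P[O1 L2 P3].
  by rewrite inOcol_mul // maps // inPcol_mul //; apply: integral_antitr.
move=> y; have [y1 [y2 [y3 ->]]] := levi_colP y.
rewrite inL_levi_col => /and3P[O1 /onto[x2 [L2 <-]] P3].
exists (levi_col (invmx C *m y1) x2 (antitr C *m y3)); split.
  by rewrite inL_levi_col inOcol_mul // L2 inPcol_mul //; apply: integral_antitr.
by rewrite levi_mul_col !mulmxA mulmxV // mul_antitr mulmxV // antitr1 !mul1mx.
Qed.

Lemma inJ_levi C D : C \in unitmx -> inSO D ->
  inJ v (levi C D) <-> inGLO v C /\ inJ v D.
Proof.
move=> Cu SOD; split=> [J|[GC JD]]; last exact: levi_inJ.
by split; [exact: inJ_levi_GLO J | exact: inJ_levi_J J].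
Qed.

End LeviLattice.

Section LeviReduction.
Variables (k : finFieldType) (red : F -> k) (w : F) (a b : nat).
Hypothesis red1 : red 1 = 1.
Hypothesis redD : forall x y, inO v x -> inO v y -> red (x + y) = red x + red y.
Hypothesis redM : forall x y, inO v x -> inO v y -> red (x * y) = red x * red y.
Hypothesis w_neq0 : w != 0.
Implicit Types (C : 'M[F]_a) (D : 'M[F]_(b.*2.+1)).

Lemma gbar_levi C D :
  gbar red w (levi C D) = castmx (levi_size_bar a b, levi_size_bar a b)
    (block_mx (map_mx red C) 0 0
       (block_mx (gbar red w D) 0 0 (map_mx red (antitr (invmx C))))).
Proof.
have r0 := red0 redD.
apply/matrixP => i j.
rewrite -[i](cast_ordKV (levi_size_bar a b)) -[j](cast_ordKV (levi_size_bar a b)).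
rewrite castmxE !cast_ordK [LHS]mxE levi_block3 castmxE.
move: (cast_ord _ i) (cast_ord _ j) => {i j} I J.
have ab : ((inord (a + b) : 'I_((a + b).*2.+1)) : nat) = (a + b)%N by rewrite inordK //; lia.
have bb : ((inord b : 'I_(b.*2.+1)) : nat) = b by rewrite inordK //; lia.
move eI : (cast_ord _ (lift _ (cast_ord _ I))) => I'.
move eJ : (cast_ord _ (lift _ (cast_ord _ J))) => J'.
have : bump (a + b) I = I' by rewrite -eI /= ab.
have : bump (a + b) J = J' by rewrite -eJ /= ab.
rewrite /block3_mx.
case_split_ord I x; case_split_ord J y; case_split_ord I' x'; case_split_ord J' y';
  rewrite /= /bump => eJ' eI'; try (exfalso; lia).
all: do 3!block_mxE; rewrite ?mxE ?mul0r ?r0 //.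
all: try (have -> : x' = x by apply/val_inj => /=; lia).
all: try (have -> : y' = y by apply/val_inj => /=; lia).
all: try (have -> : x' = lift (inord b) x by apply/val_inj; rewrite /= bb /bump; lia).
all: try (have -> : y' = lift (inord b) y by apply/val_inj; rewrite /= bb /bump; lia).
(* On the [D] block the factors [dsc] of both sizes coincide; on the [C] and
   [antitr (invmx C)] blocks they are [1] resp. [w] on both sides and cancel. *)
all: rewrite /dsc /= ?ab ?bb /bump.
all: repeat case: ifP => ?; try (exfalso; lia).
all: by rewrite ?mulr1 ?divr1 ?mulfK.
Qed.

Lemma alpha_trivial_levi C D :
  inGLO v C -> alpha_trivial red w (levi C D) = alpha_trivial red w D.
Proof.
case=> Cu OC OCi.
have MN : map_mx red C *m map_mx red (invmx C) = 1%:M.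
  by rewrite -(map_red_mulmx redD redM) // mulmxV // (map_red1 red1 redD).
rewrite /alpha_trivial gbar_levi map_antitr; case: ifP => _.
  by rewrite -castmx_sub1mx mxrank_castmx mxrank_sub1_levi_block // oddD odd_double addbF.
by rewrite det_castmx det_levi_block.
Qed.

Lemma inJplus_levi C D : C \in unitmx -> inSO D ->
  inJplus v red w (levi C D) <-> inGLO v C /\ inJplus v red w D.
Proof.
move=> Cu SOD; rewrite /inJplus (inJ_levi Cu SOD).
by split=> [[[GC JD] alpha]|[GC [JD alpha]]]; rewrite alpha_trivial_levi // in alpha *.
Qed.

End LeviReduction.
End Valuation.

Section BlockDiagonalGLO.
Variables (F : fieldType) (r : nat) (p : 'I_r -> nat) (C : forall i, 'M[F]_(p i)).
Hypothesis C_unit : forall i, C i \in unitmx.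

Lemma blockdiag_mulV : blockdiag C *m mxdiag (fun i => invmx (C i)) = 1%:M.
Proof.
rewrite /blockdiag mul_mxdiag; under eq_mxdiag do rewrite mulmxV ?C_unit //.
exact: mxdiagZ.
Qed.

Lemma blockdiag_unitmx : blockdiag C \in unitmx.
Proof. by case: (mulmx1_unit blockdiag_mulV). Qed.

Lemma invmx_blockdiag : invmx (blockdiag C) = mxdiag (fun i => invmx (C i)).
Proof. by rewrite -[LHS]mulmx1 -blockdiag_mulV mulmxA mulVmx ?blockdiag_unitmx ?mul1mx. Qed.

Lemma inGLO_blockdiag (v : F -> int) : inGLO v (blockdiag C) <-> forall i, inGLO v (C i).
Proof.
split=> [[_ OC OCi] i|GC]; last split.
- split=> // k l; first by have [s [t ->]] := mxdiag_block_entry C k l; apply: OC.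
  have [s [t ->]] := mxdiag_block_entry (fun i => invmx (C i)) k l.
  by rewrite -invmx_blockdiag; apply: OCi.
- exact: blockdiag_unitmx.
- by apply: mxdiag_entry_ind => [|i k l]; [exact: inO0 | case: (GC i)].
- rewrite invmx_blockdiag.
  by apply: mxdiag_entry_ind => [|i k l]; [exact: inO0 | case: (GC i)].
Qed.

End BlockDiagonalGLO.

Theorem proposition3p5p3
  (F : fieldType) (v : F -> int) (k : finFieldType) (red : F -> k)
  (hF : nonarch_local_field_char0 v red)
  (w : F) (hw : w != 0 /\ v w = 1)
  (r : nat) (p : 'I_r -> nat) (hp : forall i, (0 < p i)%N) (nt : nat)
  (C : forall i : 'I_r, 'M[F]_(p i)) (hC : forall i, C i \in unitmx)
  (D : 'M[F]_(nt.*2.+1)) (hD : inSO D) :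
  inJplus v red w (levi (blockdiag C) D) <->
  ((forall i, inGLO v (C i)) /\ inJplus v red w D).
Proof.
case: hF => _ [v_mul v_min _] _ [red1 redD redM _ _]; case: hw => w_neq0 _.
have := inJplus_levi v_mul v_min red1 redD redM w_neq0 (blockdiag_unitmx hC) hD.
have := inGLO_blockdiag hC v.
tauto.
Qed.
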